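(* Let $P_0$ be a policy over a DTD $D$, and let $P_1=(\mathcal A_1,\mathcal F_1)$ and $P_2=(\mathcal A_2,\mathcal F_2)$ be consistent total policies over $D$ that both extend $P_0$ (i.e. $P_0\sqsubseteq P_1$ and $P_0\sqsubseteq P_2$). Then $P_1\wedge P_2=(\mathcal A_1\cap\mathcal A_2,\ \mathcal F_1\cup\mathcal F_2)$ is a consistent total policy that extends $P_0$.
   Context: Let $\mathcal L$ be an infinite set of labels and $\mathsf{str}\notin\mathcal L$ a special symbol. A DTD is a triple $D=(Ele,Rg,rt)$ where $Ele\subseteq\mathcal L$ is finite, $rt\in Ele$ is the root type, and for each $A\in Ele$, $Rg(A)$ is one of: $\mathsf{str}$, $\epsilon$, $B_1,\dots,B_n$ (concatenation), $B_1+\dots+B_n$ (disjunction), or $B_1^*$ (Kleene star), where the $B_i\in Ele$ are pairwise distinct and are called subelement types of $A$. DTDs are non-recursive: the directed graph on $Ele$ with an edge $A\to B$ whenever $B$ is a subelement type of $A$ is acyclic. $\le_D$ denotes the reflexive–transitive closure of the subelement relation. We assume every element type is reachable from the root: $rt\le_D A$ for all $A\in Ele$. An XML tree is $t=(N_t,E_t,\lambda_t,r_t,v_t)$: a finite rooted unordered tree with node set $N_t$, parent–child edge set $E_t$, root $r_t$, labelling $\lambda_t:N_t\to\mathcal L\cup\{\mathsf{str}\}$, and a function $v_t$ assigning a string to each node labelled $\mathsf{str}$. The tree $t$ conforms to $D$ at $A\in Ele$ if $\lambda_t(r_t)=A$, every node is labelled by an element of $Ele\cup\{\mathsf{str}\}$,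 every node labelled $B\in Ele$ has children whose labels, listed in some order, form a word of the language of the regular expression $Rg(B)$ (with $Rg(B)=\mathsf{str}$ meaning a single child labelled $\mathsf{str}$ and $\epsilon$ meaning no children), and every node labelled $\mathsf{str}$ is a leaf with a defined string value. $I_D(A)$ is the set of trees conforming to $D$ at $A$, and $I_D=I_D(rt)$. Trees $t_1,t_2$ are isomorphic, $t_1\equiv t_2$, if there is a bijection $N_{t_1}\to N_{t_2}$ preserving root, edges, labels and string values. Atomic updates on a tree $t$: $\mathsf{insert}(n,t')$ adds the tree $t'$ with its root as a new child of $n$; $\mathsf{delete}(n)$ removes $n$ and all its descendants; $\mathsf{replace}(n,t')$ removes the subtree rooted at $n$ and attaches $t'$ (by its root) as a child of the former parent of $n$; $\mathsf{replace}(n,s)$, for a string $s$, sets the string value of $n$ to $s$. An update is valid on $t$ if $n\in N_t$ and the tree $t'$ (if present) has node set disjoint from $N_t$; $[\![op]\!](t)$ denotes the result. For a sequence, $[\![op_1;\dots;op_k]\!](t)=[\![op_k]\!](\cdots[\![op_1]\!](t)\cdots)$, and the sequence is valid on $t$ if each $op_i$ is valid on the result of $op_1;\dots;op_{i-1}$. Update access types (UATs) are expressions $(A,\mathsf{insert}(B))$, $(A,\mathsf{delete}(B))$, $(A,\mathsf{replace}(B,B'))$ with $B\neq B'$, and $(A,\mathsf{replace}(\mathsf{str},\mathsf{str}))$, with $A\in Ele$; $A$ is the element type of the UAT. Such a UAT is valid for $D$ iff, respectively: $Rg(A)=B^*$; $Rg(A)=B^*$; $Rg(A)=B_1+\dots+B_n$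 with $B,B'\in\{B_1,\dots,B_n\}$, $B\neq B'$; $Rg(A)=\mathsf{str}$. $\mathrm{valid}(D)$ is the set of UATs valid for $D$. An atomic update matches a UAT on $t$ as follows: $\mathsf{insert}(n,t')$ matches $(A,\mathsf{insert}(B))$ if $\lambda_t(n)=A$ and $t'\in I_D(B)$; $\mathsf{delete}(n)$ matches $(A,\mathsf{delete}(B))$ if $\lambda_t(n)=B$ and the parent of $n$ is labelled $A$; $\mathsf{replace}(n,t')$ matches $(A,\mathsf{replace}(B,B'))$ if $\lambda_t(n)=B$, the parent of $n$ is labelled $A$, $t'\in I_D(B')$ and $B\neq B'$; $\mathsf{replace}(n,s)$ matches $(A,\mathsf{replace}(\mathsf{str},\mathsf{str}))$ if $\lambda_t(n)=\mathsf{str}$ and the parent of $n$ is labelled $A$. For a set $S$ of UATs, $[\![S]\!]_t$ is the set of atomic updates matching some element of $S$ on $t$. A sequence $op_1;\dots;op_k$ is allowed on $t$ by $S$ if it is valid on $t$ and $op_i\in[\![S]\!]_{t_{i-1}}$ for all $i$, where $t_0=t$ and $t_i=[\![op_i]\!](t_{i-1})$. A policy over $D$ is a pair $P=(\mathcal A,\mathcal F)$ with $\mathcal A,\mathcal F\subseteq\mathrm{valid}(D)$ and $\mathcal A\cap\mathcal F=\emptyset$ (allowed and forbidden UATs); it is total if $\mathcal A\cup\mathcal F=\mathrm{valid}(D)$ and partial otherwise. $P$ is consistent if there exist no $t\in I_D$, no sequence $op_1;\dots;op_k$ ($k\ge1$) allowed on $t$ by $\mathcal A$, and no $op_0\in[\![\mathcal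 F]\!]_t$ valid on $t$ and non-trivial (i.e. $[\![op_0]\!](t)\not\equiv t$) such that $[\![op_1;\dots;op_k]\!](t)\equiv[\![op_0]\!](t)$. Writing $P=(\mathcal A_P,\mathcal F_P)$, the information ordering is $P\sqsubseteq Q$ iff $\mathcal A_P\subseteq\mathcal A_Q$ and $\mathcal F_P\subseteq\mathcal F_Q$; then $Q$ is said to extend $P$. *)

From Stdlib Require Import List String Relations ClassicalEpsilon Arith.
Import ListNotations.
Set Implicit Arguments.

Section Defs.
Variable L : Type.

Inductive rgx : Type :=
| RStr
| REps
| RCat  (bs : list L)
| RDisj (bs : list L)
| RStar (b : L).

Definition subs (r : rgx) : list L :=
  match r with
  | RStr | REps => []
  | RCat bs | RDisj bs => bs
  | RStar b => [b]
  end.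

Record dtd : Type := { ele : list L; rg : L -> rgx; rt : L }.

Definition subel (D : dtd) (A B : L) : Prop := In A (ele D) /\ In B (subs (rg D A)).

Definition wf_dtd (D : dtd) : Prop :=
  In (rt D) (ele D) /\
  (forall A, In A (ele D) ->
     (forall B, In B (subs (rg D A)) -> In B (ele D)) /\ NoDup (subs (rg D A)) /\
     (forall bs, rg D A = RCat bs -> bs <> []) /\
     (forall bs, rg D A = RDisj bs -> bs <> [])) /\
  (forall A, ~ clos_trans L (subel D) A A) /\
  (forall A, In A (ele D) -> clos_refl_trans L (subel D) (rt D) A).

(* Words over L ∪ {str}; None encodes str *)
Definition lang (r : rgx) (w : list (option L)) : Prop :=
  match r with
  | RStr => w = [None]
  | REps => w = []
  | RCat bs => w = map Some bs
  | RDisj bs => exists b, In b bs /\ w = [Some b]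
  | RStar b => Forall (fun x => x = Some b) w
  end.

(* XML trees; node identifiers are natural numbers; lab n = None means str *)
Record tree : Type := {
  nodes : nat -> Prop;
  edge  : nat -> nat -> Prop;
  root  : nat;
  lab   : nat -> option L;
  val   : nat -> string }.

Definition is_tree (t : tree) : Prop :=
  (exists l : list nat, forall x, nodes t x -> In x l) /\
  nodes t (root t) /\
  (forall x y, edge t x y -> nodes t x /\ nodes t y) /\
  (forall x, ~ edge t x (root t)) /\
  (forall y, nodes t y -> y <> root t -> exists x, edge t x y) /\
  (forall x x' y, edge t x y -> edge t x' y -> x = x') /\
  (forall y, nodes t y -> clos_refl_trans nat (edge t) (root t) y).

Definition conforms (D : dtd) (A : L) (t : tree) : Prop :=
  is_tree t /\
  lab t (root t) = Some A /\
  (forall n, nodes t n -> lab t n = None \/ exists B, lab t n = Some B /\ In B (ele D)) /\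
  (forall n B, nodes t n -> lab t n = Some B ->
     exists cs : list nat, NoDup cs /\ (forall c, In c cs <-> edge t n c) /\
       lang (rg D B) (map (lab t) cs)) /\
  (forall n, nodes t n -> lab t n = None -> forall c, ~ edge t n c).

Definition iso (t1 t2 : tree) : Prop :=
  exists f : nat -> nat,
    (forall n, nodes t1 n -> nodes t2 (f n)) /\
    (forall n m, nodes t1 n -> nodes t1 m -> f n = f m -> n = m) /\
    (forall m, nodes t2 m -> exists n, nodes t1 n /\ f n = m) /\
    f (root t1) = root t2 /\
    (forall n m, nodes t1 n -> nodes t1 m -> (edge t1 n m <-> edge t2 (f n) (f m))) /\
    (forall n, nodes t1 n -> lab t1 n = lab t2 (f n)) /\
    (forall n, nodes t1 n -> lab t1 n = None -> val t1 n = val t2 (f n)).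

Inductive op : Type :=
| Ins (n : nat) (t' : tree)
| Del (n : nat)
| Repl (n : nat) (t' : tree)
| ReplS (n : nat) (s : string).

Definition pdec (P : Prop) : {P} + {~ P} := excluded_middle_informative P.

Definition desc (t : tree) (n x : nat) : Prop := clos_refl_trans nat (edge t) n x.

Definition apply (t : tree) (o : op) : tree :=
  match o with
  | Ins n t' =>
      {| nodes := fun x => nodes t x \/ nodes t' x;
         edge := fun x y => edge t x y \/ edge t' x y \/ (x = n /\ y = root t');
         root := root t;
         lab := fun x => if pdec (nodes t' x) then lab t' x else lab t x;
         val := fun x => if pdec (nodes t' x) then val t' x else val t x |}
  | Del n =>
      {| nodes := fun x => nodes t x /\ ~ desc t n x;
         edge := fun x y => edge t x y /\ ~ desc t n x /\ ~ desc t n y;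
         root := root t; lab := lab t; val := val t |}
  | Repl n t' =>
      {| nodes := fun x => (nodes t x /\ ~ desc t n x) \/ nodes t' x;
         edge := fun x y => (edge t x y /\ ~ desc t n x /\ ~ desc t n y) \/ edge t' x y
                            \/ (edge t x n /\ y = root t');
         root := root t;
         lab := fun x => if pdec (nodes t' x) then lab t' x else lab t x;
         val := fun x => if pdec (nodes t' x) then val t' x else val t x |}
  | ReplS n s =>
      {| nodes := nodes t; edge := edge t; root := root t; lab := lab t;
         val := fun x => if Nat.eq_dec x n then s else val t x |}
  end.

Definition valid_op (t : tree) (o : op) : Prop :=
  match o with
  | Ins n t' | Repl n t' =>
      nodes t n /\ is_tree t' /\ (forall x, nodes t x -> nodes t' x -> False)
  | Del n | ReplS n _ => nodes t n
  end.

Fixpoint apply_seq (t : tree) (os : list op) : tree :=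
  match os with
  | [] => t
  | o :: os' => apply_seq (apply t o) os'
  end.

Inductive uat : Type :=
| UIns (A B : L)
| UDel (A B : L)
| URepl (A B B' : L)
| UReplS (A : L).

Definition valid_uat (D : dtd) (u : uat) : Prop :=
  match u with
  | UIns A B | UDel A B => In A (ele D) /\ rg D A = RStar B
  | URepl A B B' => In A (ele D) /\ B <> B' /\
      exists bs, rg D A = RDisj bs /\ In B bs /\ In B' bs
  | UReplS A => In A (ele D) /\ rg D A = RStr
  end.

Definition parent_lab (t : tree) (n : nat) (A : L) : Prop :=
  exists p, edge t p n /\ lab t p = Some A.

Definition matches (D : dtd) (t : tree) (o : op) (u : uat) : Prop :=
  match o, u with
  | Ins n t', UIns A B => lab t n = Some A /\ conforms D B t'
  | Del n, UDel A B => lab t n = Some B /\ parent_lab t n A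
  | Repl n t', URepl A B B' =>
      lab t n = Some B /\ parent_lab t n A /\ conforms D B' t' /\ B <> B'
  | ReplS n _, UReplS A => lab t n = None /\ parent_lab t n A
  | _, _ => False
  end.

Definition sem (D : dtd) (S : uat -> Prop) (t : tree) (o : op) : Prop :=
  exists u, S u /\ matches D t o u.

Fixpoint allowed (D : dtd) (S : uat -> Prop) (t : tree) (os : list op) : Prop :=
  match os with
  | [] => True
  | o :: os' => valid_op t o /\ sem D S t o /\ allowed D S (apply t o) os'
  end.

Record policy : Type := { pA : uat -> Prop; pF : uat -> Prop }.

Definition is_policy (D : dtd) (P : policy) : Prop :=
  (forall u, pA P u -> valid_uat D u) /\ (forall u, pF P u -> valid_uat D u) /\
  (forall u, pA P u -> pF P u -> False).

Definition total (D : dtd) (P : policy) : Prop :=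
  forall u, valid_uat D u <-> pA P u \/ pF P u.

Definition consistent (D : dtd) (P : policy) : Prop :=
  ~ exists (t : tree) (os : list op) (o0 : op),
      conforms D (rt D) t /\ os <> [] /\ allowed D (pA P) t os /\
      sem D (pF P) t o0 /\ valid_op t o0 /\ ~ iso (apply t o0) t /\
      iso (apply_seq t os) (apply t o0).

Definition pextends (P Q : policy) : Prop :=
  (forall u, pA P u -> pA Q u) /\ (forall u, pF P u -> pF Q u).

Definition pmeet (P1 P2 : policy) : policy :=
  {| pA := fun u => pA P1 u /\ pA P2 u; pF := fun u => pF P1 u \/ pF P2 u |}.

End Defs.

(* The argument is purely order-theoretic and uses nothing about trees:
   - allowed sequences and matched updates are monotone in the set of UATs,
     so consistency is preserved when the allowed set and the forbidden set
     both shrink ([consistent_weaken]);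
   - a forbidden update matching F1 ∪ F2 matches F1 or F2, so consistency
     is preserved under union of forbidden sets with a common allowed set
     ([consistent_union_forbidden]).
   Consistency of P1 ∧ P2 follows by weakening P1 and P2 to (A1 ∩ A2, F1)
   and (A1 ∩ A2, F2) and taking the union.  Well-formedness, totality and
   extension of P0 are checked componentwise. *)
From Stdlib Require Import List String Relations ClassicalEpsilon Arith.
Set Implicit Arguments.
Unset Strict Implicit.

Section Meet.
Variable L : Type.
Variable D : dtd L.

Lemma sem_mono (S S' : uat L -> Prop) (t : tree L) (o : op L) :
  (forall u, S u -> S' u) -> sem D S t o -> sem D S' t o.
Proof.
  intros HS [u [Hu Hm]]. exists u. split; [apply HS|]; assumption.
Qed.

Lemma sem_union (S1 S2 : uat L -> Prop) (t : tree L) (o : op L) :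
  sem D (fun u => S1 u \/ S2 u) t o -> sem D S1 t o \/ sem D S2 t o.
Proof.
  intros [u [[Hu | Hu] Hm]]; [left | right]; exists u; split; assumption.
Qed.

Lemma allowed_mono (S S' : uat L -> Prop) :
  (forall u, S u -> S' u) -> forall os t, allowed D S t os -> allowed D S' t os.
Proof.
  intros HS os. induction os as [|o os IH]; intros t H; simpl in *; [trivial|].
  destruct H as [Hvalid [Hsem Hrest]].
  split; [exact Hvalid|]. split.
  - exact (sem_mono HS Hsem).
  - exact (IH _ Hrest).
Qed.

Lemma consistent_weaken (P Q : policy L) :
  (forall u, pA Q u -> pA P u) -> (forall u, pF Q u -> pF P u) ->
  consistent D P -> consistent D Q.
Proof.
  intros HA HF HP [t [os [o0 [Hc [Hne [Hallowed [Hforb Hrest]]]]]]].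
  apply HP. exists t, os, o0.
  exact (conj Hc (conj Hne (conj (allowed_mono HA Hallowed)
           (conj (sem_mono HF Hforb) Hrest)))).
Qed.

Lemma consistent_union_forbidden (A F1 F2 : uat L -> Prop) :
  consistent D {| pA := A; pF := F1 |} -> consistent D {| pA := A; pF := F2 |} ->
  consistent D {| pA := A; pF := fun u => F1 u \/ F2 u |}.
Proof.
  intros C1 C2 [t [os [o0 [Hc [Hne [Hallowed [Hforb Hrest]]]]]]]. simpl in *.
  destruct (sem_union Hforb) as [Hforb1 | Hforb2].
  - apply C1. exists t, os, o0. exact (conj Hc (conj Hne (conj Hallowed (conj Hforb1 Hrest)))).
  - apply C2. exists t, os, o0. exact (conj Hc (conj Hne (conj Hallowed (conj Hforb2 Hrest)))).
Qed.

Lemma consistent_pmeet (P1 P2 : policy L) :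
  consistent D P1 -> consistent D P2 -> consistent D (pmeet P1 P2).
Proof.
  intros C1 C2. apply consistent_union_forbidden.
  - apply (consistent_weaken (P := P1)); [intros u [H _] | intros u H | ]; assumption.
  - apply (consistent_weaken (P := P2)); [intros u [_ H] | intros u H | ]; assumption.
Qed.

Lemma is_policy_pmeet (P1 P2 : policy L) :
  is_policy D P1 -> is_policy D P2 -> is_policy D (pmeet P1 P2).
Proof.
  intros [A1 [F1 Disj1]] [A2 [F2 Disj2]]. simpl. split; [|split].
  - intros u [H _]. exact (A1 u H).
  - intros u [H | H]; [exact (F1 u H) | exact (F2 u H)].
  - intros u [H1 H2] [H | H]; [exact (Disj1 u H1 H) | exact (Disj2 u H2 H)].
Qed.

Lemma total_pmeet (P1 P2 : policy L) :
  total D P1 -> total D P2 -> total D (pmeet P1 P2).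
Proof.
  intros T1 T2 u. simpl. split.
  - intros Hv. destruct (proj1 (T1 u) Hv); destruct (proj1 (T2 u) Hv); tauto.
  - intros [[H _] | [H | H]];
      [apply (T1 u) | apply (T1 u) | apply (T2 u)]; tauto.
Qed.

Lemma pextends_pmeet (P0 P1 P2 : policy L) :
  pextends P0 P1 -> pextends P0 P2 -> pextends P0 (pmeet P1 P2).
Proof.
  intros [EA1 EF1] [EA2 _]. simpl. split.
  - intros u H. split; [exact (EA1 u H) | exact (EA2 u H)].
  - intros u H. left. exact (EF1 u H).
Qed.

End Meet.

Theorem lemma1 (L : Type) (L_infinite : forall l : list L, exists x : L, ~ List.In x l)
  (D : dtd L) (HD : wf_dtd D) (P0 P1 P2 : policy L) :
  is_policy D P0 -> is_policy D P1 -> is_policy D P2 ->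
  total D P1 -> total D P2 -> consistent D P1 -> consistent D P2 ->
  pextends P0 P1 -> pextends P0 P2 ->
  is_policy D (pmeet P1 P2) /\ total D (pmeet P1 P2) /\
  consistent D (pmeet P1 P2) /\ pextends P0 (pmeet P1 P2).
Proof.
  intros _ Pol1 Pol2 T1 T2 C1 C2 E1 E2.
  split; [|split; [|split]].
  - exact (is_policy_pmeet Pol1 Pol2).
  - exact (total_pmeet T1 T2).
  - exact (consistent_pmeet C1 C2).
  - exact (pextends_pmeet E1 E2).
Qed.
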